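(* For every integer $n\ge 2$, the dihedral Artin group $DA_n=\langle a,b\mid [aba\cdots]_n=[bab\cdots]_n\rangle$ is Cayley systolic.
   Context: $[xyx\cdots]_k$ denotes the alternating word $xyx\cdots$ of length $k$. A group is Cayley systolic if it admits a systolic presentation, i.e. a presentation $\langle S\mid R\rangle$ with $S$ a finite generating set such that: $S\cap S^{-1}=\emptyset$; $R=\{a\cdot b\cdot c^{-1}\mid a,b,c\in S,\ abc^{-1}=e\}$ presents the group; there are no $a,b,c\in S$ with $abc=e$; $abc\in S\Rightarrow ab,bc\in S$; and $S$ satisfies: (1) if $ua=wb\in S$, $ud=wc\in S$, $u\neq w$, $a\neq d$ ($u,w,a,b,c,d\in S$), then $\exists k\in S$: $w=uk$ or $ua=udk$; (2) if $bv=cx\in S$, $av=dx\in S$, $v\neq x$, $a\neq b$, then $\exists k\in S$: $v=kx$ or $av=kbv$; (3) if $ux,uv\in S$, $vb=xc\in S$, $v\neq x$, then $\exists k\in S$: $k=uvb$ or $v=xk$; (4) if $vw,xw\in S$, $dx=av\in S$, $v\neq x$, then $\exists k\in S$: $k=avw$ or $x=kv$; (5) if $wv,wx,uv,ux\in S$, $v\neq x$, $u\neq w$, then $\exists k\in S$: $w=ku$ or $x=vk$. *)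

From Stdlib Require Import List.
Import ListNotations.

Record Group := {
  gcar :> Type;
  gmul : gcar -> gcar -> gcar;
  ginv : gcar -> gcar;
  gone : gcar;
  gmulA : forall x y z, gmul x (gmul y z) = gmul (gmul x y) z;
  gmul1l : forall x, gmul gone x = x;
  gmulVl : forall x, gmul (ginv x) x = gone }.

Arguments gmul {g}.
Arguments ginv {g}.
Arguments gone {g}.

(* Words over an alphabet X: letters x^{+1} (false) or x^{-1} (true). *)
Definition word (X : Type) := list (X * bool).

Fixpoint eval_word {G : Group} {X : Type} (f : X -> G) (w : word X) : G :=
  match w with
  | [] => gone
  | (x, inv) :: w' => gmul (if inv then ginv (f x) else f x) (eval_word f w')
  end.

Definition is_hom (G H : Group) (phi : G -> H) : Prop :=
  forall x y : G, phi (gmul x y) = gmul (phi x) (phi y).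

Definition presents (G : Group) (X : Type) (iota : X -> G)
  (R : word X -> word X -> Prop) : Prop :=
  (forall g : G, exists w : word X, eval_word iota w = g) /\
  (forall u v, R u v -> eval_word iota u = eval_word iota v) /\
  (forall (H : Group) (f : X -> H),
     (forall u v, R u v -> eval_word f u = eval_word f v) ->
     exists phi : G -> H, is_hom G H phi /\ forall x, phi (iota x) = f x).

Fixpoint alt {X : Type} (x y : X) (k : nat) : word X :=
  match k with
  | 0 => []
  | S k' => (x, false) :: alt y x k'
  end.

(* Dihedral Artin group DA_n = < a, b | [aba...]_n = [bab...]_n >,
   generators a = true, b = false. *)
Definition dihedral_artin_rel (n : nat) (u v : word bool) : Prop :=
  u = alt true false n /\ v = alt false true n.

Definition is_dihedral_artin (n : nat) (G : Group) (a b : G) : Prop :=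
  presents G bool (fun x => if x then a else b) (dihedral_artin_rel n).

Definition systolic_presentation (G : Group) (S : list G) : Prop :=
  let inS := fun x : G => In x S in
  (forall s t, inS s -> inS t -> s <> ginv t) /\
  presents G {s : G | In s S} (@proj1_sig G (fun s => In s S))
    (fun u v => exists a b c : {s : G | In s S},
        gmul (proj1_sig a) (gmul (proj1_sig b) (ginv (proj1_sig c))) = gone /\
        u = [(a, false); (b, false); (c, true)] /\ v = []) /\
  (forall a b c, inS a -> inS b -> inS c -> gmul (gmul a b) c <> gone) /\
  (forall a b c, inS a -> inS b -> inS c -> inS (gmul (gmul a b) c) ->
     inS (gmul a b) /\ inS (gmul b c)) /\
  (forall u w a b c d, inS u -> inS w -> inS a -> inS b -> inS c -> inS d ->
     gmul u a = gmul w b -> inS (gmul u a) ->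
     gmul u d = gmul w c -> inS (gmul u d) ->
     u <> w -> a <> d ->
     exists k, inS k /\ (w = gmul u k \/ gmul u a = gmul (gmul u d) k)) /\
  (forall a b c d v x, inS a -> inS b -> inS c -> inS d -> inS v -> inS x ->
     gmul b v = gmul c x -> inS (gmul b v) ->
     gmul a v = gmul d x -> inS (gmul a v) ->
     v <> x -> a <> b ->
     exists k, inS k /\ (v = gmul k x \/ gmul a v = gmul (gmul k b) v)) /\
  (forall u v x b c, inS u -> inS v -> inS x -> inS b -> inS c ->
     inS (gmul u x) -> inS (gmul u v) ->
     gmul v b = gmul x c -> inS (gmul v b) ->
     v <> x ->
     exists k, inS k /\ (k = gmul (gmul u v) b \/ v = gmul x k)) /\
  (forall v w x d a, inS v -> inS w -> inS x -> inS d -> inS a ->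
     inS (gmul v w) -> inS (gmul x w) ->
     gmul d x = gmul a v -> inS (gmul d x) ->
     v <> x ->
     exists k, inS k /\ (k = gmul (gmul a v) w \/ x = gmul k v)) /\
  (forall w v x u, inS w -> inS v -> inS x -> inS u ->
     inS (gmul w v) -> inS (gmul w x) -> inS (gmul u v) -> inS (gmul u x) ->
     v <> x -> u <> w ->
     exists k, inS k /\ (w = gmul k u \/ x = gmul v k)).

Definition cayley_systolic (G : Group) : Prop :=
  exists S : list G, systolic_presentation G S.

(* Put D = ab and x_0 = a, x_1 = b, x_{k+2} = D^{-1} x_k D.  Then
   x_k x_{k+1} = D for every k, and the Artin relation [ab..]_n = [ba..]_n is
   equivalent to x_{n-1} a = D.  Take S = {x_0, ..., x_{n-1}, D}.  The triangle
   relations x_k x_{k+1} = D (k < n-1) and x_{n-1} x_0 = D present DA_n: any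
   assignment respecting them is forced to send x_k to the k-th dual generator
   of the images of a and b, which therefore satisfy the Artin relation.

   The abelianisation gives a degree map deg : DA_n -> Z with deg a = deg b = 1,
   so every x_k has degree 1 and D has degree 2.  Hence S ∩ S^{-1} = ∅, no
   triangle abc = e exists, no triple product lies in S, and a product st of
   two elements of S lies in S only when st = D.  This last fact makes the
   hypotheses of conditions (1)-(5) contradictory by cancellation. *)

From Stdlib Require Import List Arith Lia ZArith ProofIrrelevance.
Import ListNotations.

Section GroupFacts.
Variable K : Group.
Implicit Types x y z : K.

Lemma mulrV x : gmul x (ginv x) = gone.
Proof.
  rewrite <- (gmul1l K (gmul x (ginv x))), <- (gmulVl K (ginv x)) at 1.
  rewrite <- gmulA, (gmulA K (ginv x) x), gmulVl, gmul1l.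
  apply gmulVl.
Qed.

Lemma mulr1 x : gmul x gone = x.
Proof. rewrite <- (gmulVl K x), gmulA, mulrV. apply gmul1l. Qed.

Lemma mulKl x y : gmul (ginv x) (gmul x y) = y.
Proof. rewrite gmulA, gmulVl. apply gmul1l. Qed.

Lemma mulKr x y : gmul x (gmul (ginv x) y) = y.
Proof. rewrite gmulA, mulrV. apply gmul1l. Qed.

Lemma cancel_l x y z : gmul x y = gmul x z -> y = z.
Proof. intro E. rewrite <- (mulKl x y), <- (mulKl x z), E. reflexivity. Qed.

Lemma cancel_r x y z : gmul y x = gmul z x -> y = z.
Proof.
  intro E. rewrite <- (mulr1 y), <- (mulr1 z), <- (mulrV x), !gmulA, E.
  reflexivity.
Qed.

Lemma inv_uniq x y : gmul x y = gone -> y = ginv x.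
Proof. intro E. apply (cancel_l x). rewrite E, mulrV. reflexivity. Qed.

Lemma inv1 : ginv (@gone K) = gone.
Proof. symmetry. apply inv_uniq, gmul1l. Qed.

Lemma invM x y : ginv (gmul x y) = gmul (ginv y) (ginv x).
Proof.
  symmetry. apply inv_uniq.
  rewrite <- gmulA, (gmulA K y), mulrV, gmul1l. apply mulrV.
Qed.

Lemma relator_of_eq x y z : gmul x y = z -> gmul x (gmul y (ginv z)) = gone.
Proof. intro E. rewrite gmulA, E. apply mulrV. Qed.

Lemma eq_of_relator x y z : gmul x (gmul y (ginv z)) = gone -> gmul x y = z.
Proof.
  intro E. apply (cancel_r (ginv z)). rewrite <- gmulA, E, mulrV. reflexivity.
Qed.

Lemma conjM (P X Y : K) :
  gmul (gmul (gmul (ginv P) X) P) (gmul (gmul (ginv P) Y) P)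
  = gmul (gmul (ginv P) (gmul X Y)) P.
Proof.
  rewrite <- !gmulA. f_equal. f_equal. rewrite (gmulA K P), mulrV, gmul1l.
  reflexivity.
Qed.

Lemma conj_mul_eq (P X Y Z : K) :
  gmul (gmul (gmul (ginv P) X) P) Y = Z <-> gmul X (gmul P Y) = gmul P Z.
Proof.
  rewrite <- !gmulA. split; intro E.
  - rewrite <- E, mulKr. reflexivity.
  - rewrite E, mulKl. reflexivity.
Qed.

End GroupFacts.

Lemma hom1 (G H : Group) (phi : G -> H) : is_hom G H phi -> phi gone = gone.
Proof.
  intro h. apply (cancel_l H (phi gone)). rewrite <- h, gmul1l, mulr1.
  reflexivity.
Qed.

Lemma homV (G H : Group) (phi : G -> H) (x : G) :
  is_hom G H phi -> phi (ginv x) = ginv (phi x).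
Proof. intro h. apply inv_uniq. rewrite <- h, mulrV. apply (hom1 G H phi h). Qed.

Fixpoint gpow {K : Group} (x : K) (k : nat) : K :=
  match k with 0 => gone | S k => gmul x (gpow x k) end.

Fixpoint altp {K : Group} (x y : K) (k : nat) : K :=
  match k with 0 => gone | S k => gmul x (altp y x k) end.

Lemma eval_alt (K : Group) (X : Type) (f : X -> K) (x y : X) (k : nat) :
  eval_word f (alt x y k) = altp (f x) (f y) k.
Proof. revert x y; induction k; intros; simpl; [|rewrite IHk]; reflexivity. Qed.

Section Alternating.
Variable K : Group.
Implicit Types x y : K.

Lemma gpowS x k : gpow x (S k) = gmul (gpow x k) x.
Proof.
  induction k; simpl.
  - rewrite gmul1l, mulr1. reflexivity.
  - simpl in IHk. rewrite IHk at 1. rewrite gmulA. reflexivity.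
Qed.

Lemma pow_swap x y m :
  gmul (gpow (gmul y x) m) y = gmul y (gpow (gmul x y) m).
Proof.
  induction m; simpl; [rewrite gmul1l, mulr1; reflexivity|].
  rewrite <- gmulA, IHm, !gmulA. reflexivity.
Qed.

Lemma altp_even x y m : altp x y (2 * m) = gpow (gmul x y) m.
Proof.
  induction m; [reflexivity|].
  replace (2 * S m) with (S (S (2 * m))) by lia.
  change (altp x y (S (S (2 * m)))) with (gmul x (gmul y (altp x y (2 * m)))).
  simpl gpow. rewrite IHm, gmulA. reflexivity.
Qed.

Lemma altp_odd x y m : altp x y (S (2 * m)) = gmul (gpow (gmul x y) m) x.
Proof.
  induction m; [simpl; rewrite gmul1l, mulr1; reflexivity|].
  replace (S (2 * S m)) with (S (S (S (2 * m)))) by lia.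
  change (altp x y (S (S (S (2 * m)))))
    with (gmul x (gmul y (altp x y (S (2 * m))))).
  rewrite IHm. simpl gpow. rewrite !gmulA. reflexivity.
Qed.

End Alternating.

Fixpoint dual_gen {K : Group} (A B : K) (k : nat) : K :=
  match k with
  | 0 => A
  | S 0 => B
  | S (S k) => gmul (gmul (ginv (gmul A B)) (dual_gen A B k)) (gmul A B)
  end.

Section DualGenerators.
Variable K : Group.
Variables A B : K.

Lemma dual_gen_closed j :
  dual_gen A B (2 * j) = gmul (gmul (ginv (gpow (gmul A B) j)) A) (gpow (gmul A B) j)
  /\ dual_gen A B (S (2 * j))
     = gmul (gmul (ginv (gpow (gmul A B) j)) B) (gpow (gmul A B) j).
Proof.
  induction j as [|j [IHe IHo]].
  { simpl. rewrite inv1, !gmul1l, !mulr1. split; reflexivity. }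
  replace (2 * S j) with (S (S (2 * j))) by lia.
  change (dual_gen A B (S (S (2 * j))))
    with (gmul (gmul (ginv (gmul A B)) (dual_gen A B (2 * j))) (gmul A B)).
  change (dual_gen A B (S (S (S (2 * j)))))
    with (gmul (gmul (ginv (gmul A B)) (dual_gen A B (S (2 * j)))) (gmul A B)).
  rewrite IHe, IHo, (gpowS K (gmul A B) j), !invM, !gmulA.
  split; reflexivity.
Qed.

Lemma dual_gen_consecutive k :
  gmul (dual_gen A B k) (dual_gen A B (S k)) = gmul A B.
Proof.
  enough (E : gmul (dual_gen A B k) (dual_gen A B (S k)) = gmul A B /\
              gmul (dual_gen A B (S k)) (dual_gen A B (S (S k))) = gmul A B)
    by apply E.
  induction k as [|k [E1 E2]].
  - split; [reflexivity|]. simpl dual_gen.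
    rewrite invM, !gmulA, mulrV, gmul1l, gmulVl, gmul1l. reflexivity.
  - split; [exact E2|].
    change (dual_gen A B (S (S (S k))))
      with (gmul (gmul (ginv (gmul A B)) (dual_gen A B (S k))) (gmul A B)).
    change (dual_gen A B (S (S k)))
      with (gmul (gmul (ginv (gmul A B)) (dual_gen A B k)) (gmul A B)).
    rewrite conjM, E1, gmulVl, gmul1l. reflexivity.
Qed.

Lemma dual_cycle_iff_artin n : 1 <= n ->
  (gmul (dual_gen A B (n - 1)) A = gmul A B <-> altp A B n = altp B A n).
Proof.
  intro Hn. destruct (Nat.Even_or_Odd n) as [[m ->]|[m ->]].
  - destruct m as [|m]; [lia|].
    replace (2 * S m - 1) with (S (2 * m)) by lia.
    rewrite (proj2 (dual_gen_closed m)), conj_mul_eq.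
    replace (2 * S m) with (S (S (2 * m))) by lia.
    change (altp B A (S (S (2 * m)))) with (gmul B (gmul A (altp B A (2 * m)))).
    change (altp A B (S (S (2 * m)))) with (gmul A (gmul B (altp A B (2 * m)))).
    rewrite !altp_even, <- (pow_swap K B A m).
    replace (gmul A (gmul B (gpow (gmul A B) m)))
      with (gmul (gpow (gmul A B) m) (gmul A B))
      by (rewrite <- gpowS, gmulA; reflexivity).
    split; intro E; symmetry; exact E.
  - replace (2 * m + 1 - 1) with (2 * m) by lia.
    replace (2 * m + 1) with (S (2 * m)) by lia.
    rewrite (proj1 (dual_gen_closed m)), conj_mul_eq, !altp_odd,
      (pow_swap K A B m), <- gpowS.
    simpl gpow. rewrite <- gmulA.
    split; intro E; [apply (cancel_l K A); exact E | rewrite E; reflexivity].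
Qed.

End DualGenerators.

Lemma hom_dual_gen (G H : Group) (phi : G -> H) (A B : G) (k : nat) :
  is_hom G H phi -> phi (dual_gen A B k) = dual_gen (phi A) (phi B) k.
Proof.
  intro h.
  enough (E : phi (dual_gen A B k) = dual_gen (phi A) (phi B) k /\
              phi (dual_gen A B (S k)) = dual_gen (phi A) (phi B) (S k))
    by apply E.
  induction k as [|k [E1 E2]]; [split; reflexivity|]. split; [exact E2|].
  simpl dual_gen. rewrite !h, homV, h, E1 by exact h. reflexivity.
Qed.

Definition Zgroup : Group :=
  {| gcar := Z; gmul := Z.add; ginv := Z.opp; gone := 0%Z;
     gmulA := Z.add_assoc; gmul1l := Z.add_0_l; gmulVl := Z.add_opp_diag_l |}.

Lemma degree_dual_gen (G : Group) (deg : G -> Zgroup) (A B : G) (k : nat) :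
  is_hom G Zgroup deg -> deg A = 1%Z -> deg B = 1%Z ->
  deg (dual_gen A B k) = 1%Z.
Proof.
  intros h dA dB. rewrite (hom_dual_gen G Zgroup deg A B k h), dA, dB.
  enough (E : @dual_gen Zgroup 1%Z 1%Z k = 1%Z /\
              @dual_gen Zgroup 1%Z 1%Z (S k) = 1%Z) by apply E.
  induction k as [|k [E1 E2]]; [split; reflexivity|]. split; [exact E2|].
  change (@dual_gen Zgroup 1%Z 1%Z (S (S k)))
    with (-(1 + 1) + @dual_gen Zgroup 1%Z 1%Z k + (1 + 1))%Z.
  rewrite E1. reflexivity.
Qed.

Definition triangle_rel (G : Group) (S : list G)
  (u v : word {s : G | In s S}) : Prop :=
  exists a b c : {s : G | In s S},
    gmul (proj1_sig a) (gmul (proj1_sig b) (ginv (proj1_sig c))) = gone /\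
    u = [(a, false); (b, false); (c, true)] /\ v = [].

Lemma triangle_rel_mul (G H : Group) (S : list G) (f : {s : G | In s S} -> H) :
  (forall u v, triangle_rel G S u v -> eval_word f u = eval_word f v) ->
  forall s t u : {s : G | In s S},
    gmul (proj1_sig s) (proj1_sig t) = proj1_sig u -> gmul (f s) (f t) = f u.
Proof.
  intros hf s t u E. apply eq_of_relator.
  specialize (hf [(s, false); (t, false); (u, true)] []).
  simpl in hf. rewrite mulr1 in hf. apply hf.
  exists s, t, u. split; [apply relator_of_eq; exact E | split; reflexivity].
Qed.

Section GradedGeneratingSet.
Variables (G : Group) (S : list G) (deg : G -> Zgroup) (D : G).
Hypothesis deg_hom : is_hom G Zgroup deg.
Hypothesis deg_D : deg D = 2%Z.
Hypothesis deg_S : forall s, In s S -> deg s = 1%Z \/ s = D.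

Lemma graded_deg_bounds s : In s S -> (1 <= deg s <= 2)%Z.
Proof. intro Hs. destruct (deg_S s Hs) as [E| ->]; lia. Qed.

Lemma graded_degM x y : deg (gmul x y) = (deg x + deg y)%Z.
Proof. apply deg_hom. Qed.

Lemma graded_product s t : In s S -> In t S -> In (gmul s t) S -> gmul s t = D.
Proof.
  intros Hs Ht Hst. destruct (deg_S _ Hst) as [E|E]; [|exact E].
  rewrite graded_degM in E.
  pose proof (graded_deg_bounds s Hs); pose proof (graded_deg_bounds t Ht). lia.
Qed.

Lemma graded_systolic :
  presents G {s : G | In s S} (@proj1_sig G (fun s => In s S)) (triangle_rel G S) ->
  systolic_presentation G S.
Proof.
  intro Hpres.
  pose proof graded_deg_bounds as B.
  split; [|split; [exact Hpres|split; [|split; [|split; [|split; [|split; [|split]]]]]]].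
  - intros s t Hs Ht E.
    assert (E' : deg s = (- deg t)%Z) by (rewrite E; apply (homV G Zgroup deg t deg_hom)).
    pose proof (B s Hs); pose proof (B t Ht). lia.
  - intros x y z Hx Hy Hz E.
    assert (E' : deg (gmul (gmul x y) z) = 0%Z)
      by (rewrite E; apply (hom1 G Zgroup deg deg_hom)).
    rewrite !graded_degM in E'. pose proof (B x Hx); pose proof (B y Hy); pose proof (B z Hz). lia.
  - intros x y z Hx Hy Hz Hxyz. exfalso. pose proof (B _ Hxyz) as Bxyz.
    rewrite !graded_degM in Bxyz. pose proof (B x Hx); pose proof (B y Hy); pose proof (B z Hz). lia.
  - intros u w a b c d Hu _ Ha _ _ Hd _ S1 _ S2 _ Had. exfalso. apply Had.
    apply (cancel_l G u). rewrite (graded_product u a), (graded_product u d); auto.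
  - intros a b c d v x Ha Hb _ _ Hv _ _ S1 _ S2 _ Hab. exfalso. apply Hab.
    apply (cancel_r G v). rewrite (graded_product a v), (graded_product b v); auto.
  - intros u v x b c Hu Hv Hx _ _ Sux Suv _ _ Hvx. exfalso. apply Hvx.
    apply (cancel_l G u). rewrite (graded_product u v), (graded_product u x); auto.
  - intros v w x d a Hv Hw Hx _ _ Svw Sxw _ _ Hvx. exfalso. apply Hvx.
    apply (cancel_r G w). rewrite (graded_product v w), (graded_product x w); auto.
  - intros w v x u Hw Hv Hx _ Swv Swx _ _ Hvx _. exfalso. apply Hvx.
    apply (cancel_l G w). rewrite (graded_product w v), (graded_product w x); auto.
Qed.

End GradedGeneratingSet.

Lemma artin_degree (n : nat) (G : Group) (a b : G) :
  is_dihedral_artin n G a b ->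
  exists deg : G -> Zgroup, is_hom G Zgroup deg /\ deg a = 1%Z /\ deg b = 1%Z.
Proof.
  intros [_ [_ Huniv]].
  destruct (Huniv Zgroup (fun _ => 1%Z)) as [deg [hdeg Hdeg]].
  { intros u v [-> ->]. rewrite !eval_alt. reflexivity. }
  exists deg. split; [exact hdeg|]. split; [exact (Hdeg true)|exact (Hdeg false)].
Qed.

Section DualPresentation.
Variables (n : nat) (G : Group) (a b : G).
Hypothesis n_ge2 : 2 <= n.
Hypothesis HG : is_dihedral_artin n G a b.

Definition dual_set : list G := map (dual_gen a b) (seq 0 n) ++ [gmul a b].

Lemma in_dual_set s :
  In s dual_set <-> (exists i, i < n /\ s = dual_gen a b i) \/ s = gmul a b.
Proof.
  unfold dual_set. rewrite in_app_iff, in_map_iff. simpl. split.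
  - intros [[i [<- Hi]]|[<-|[]]]; [left|right; reflexivity].
    rewrite in_seq in Hi. exists i. split; [lia|reflexivity].
  - intros [[i [Hi ->]]| ->]; [left|right; left; reflexivity].
    exists i. rewrite in_seq. split; [reflexivity|lia].
Qed.

Lemma dual_gen_in i : i < n -> In (dual_gen a b i) dual_set.
Proof. intro Hi. apply in_dual_set. left. exists i. split; [exact Hi|reflexivity]. Qed.

Lemma dual_top_in : In (gmul a b) dual_set.
Proof. apply in_dual_set. right. reflexivity. Qed.

Lemma a_in : In a dual_set.
Proof. apply (dual_gen_in 0). lia. Qed.

Lemma b_in : In b dual_set.
Proof. apply (dual_gen_in 1). lia. Qed.

Definition dual_letter (s : G) (p : In s dual_set) : {s : G | In s dual_set} :=
  exist (fun s => In s dual_set) s p.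

Lemma dual_cycle : gmul (dual_gen a b (n - 1)) a = gmul a b.
Proof.
  apply dual_cycle_iff_artin; [lia|].
  destruct HG as [_ [Hrel _]].
  specialize (Hrel _ _ (conj eq_refl eq_refl)). rewrite !eval_alt in Hrel.
  exact Hrel.
Qed.

Lemma dual_set_graded (deg : G -> Zgroup) :
  is_hom G Zgroup deg -> deg a = 1%Z -> deg b = 1%Z ->
  forall s, In s dual_set -> deg s = 1%Z \/ s = gmul a b.
Proof.
  intros h da db s Hs.
  destruct (proj1 (in_dual_set s) Hs) as [[i [_ ->]]| ->]; [left|right; reflexivity].
  apply degree_dual_gen; assumption.
Qed.

Lemma triangle_assignment (H : Group) (f : {s : G | In s dual_set} -> H) :
  (forall u v, triangle_rel G dual_set u v -> eval_word f u = eval_word f v) ->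
  let FA := f (dual_letter a a_in) in
  let FB := f (dual_letter b b_in) in
  (forall p, f (dual_letter (gmul a b) p) = gmul FA FB) /\
  (forall i (Hi : i < n) p, f (dual_letter (dual_gen a b i) p) = dual_gen FA FB i).
Proof.
  intros hf FA FB.
  pose proof (triangle_rel_mul G H dual_set f hf) as tri.
  assert (pirr : forall s p q, f (dual_letter s p) = f (dual_letter s q))
    by (intros s p q; rewrite (proof_irrelevance _ p q); reflexivity).
  assert (fD : forall p, f (dual_letter (gmul a b) p) = gmul FA FB)
    by (intro p; symmetry; apply (tri (dual_letter a a_in) (dual_letter b b_in)); reflexivity).
  split; [exact fD|].
  induction i as [|i IH]; intros Hi p; [apply pirr|].
  pose proof (tri (dual_letter _ (dual_gen_in i ltac:(lia))) (dual_letter _ p)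
                  (dual_letter _ dual_top_in) (dual_gen_consecutive G a b i)) as T.
  rewrite (IH ltac:(lia)), fD in T.
  apply (cancel_l H (dual_gen FA FB i)). rewrite T, dual_gen_consecutive.
  reflexivity.
Qed.

Lemma dual_presentation :
  presents G {s : G | In s dual_set} (@proj1_sig G (fun s => In s dual_set))
    (triangle_rel G dual_set).
Proof.
  pose proof HG as [Hgen [_ Huniv]].
  set (sA := dual_letter a a_in).
  set (sB := dual_letter b b_in).
  split; [|split].
  - intro g. destruct (Hgen g) as [w <-].
    exists (map (fun q : bool * bool => (if fst q then sA else sB, snd q)) w).
    induction w as [|[[] i] w IH]; simpl; rewrite ?IH; reflexivity.
  - intros u v [s [t [c [E [-> ->]]]]]. simpl. rewrite mulr1. exact E.
  - intros H f hf.
    destruct (triangle_assignment H f hf) as [fD fx]. cbv zeta in fD, fx.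
    set (FA := f sA) in fD, fx. set (FB := f sB) in fD, fx.
    assert (artin : altp FA FB n = altp FB FA n).
    { apply (dual_cycle_iff_artin H FA FB n); [lia|].
      pose proof (triangle_rel_mul G H dual_set f hf
                    (dual_letter _ (dual_gen_in (n - 1) ltac:(lia))) sA
                    (dual_letter _ dual_top_in) dual_cycle) as T.
      rewrite (fx (n - 1) ltac:(lia)), fD in T. exact T. }
    destruct (Huniv H (fun x => if x then FA else FB)) as [phi [hphi Hphi]].
    { intros u v [-> ->]. rewrite !eval_alt. exact artin. }
    exists phi. split; [exact hphi|].
    intros [s p]. simpl.
    destruct (proj1 (in_dual_set s) p) as [[i [Hi ->]]| ->].
    + rewrite (hom_dual_gen G H phi a b i hphi), (Hphi true), (Hphi false).
      symmetry. apply fx. exact Hi.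
    + rewrite hphi, (Hphi true), (Hphi false), fD. reflexivity.
Qed.

End DualPresentation.

Theorem mainTheorem12 :
  forall n : nat, 2 <= n ->
  forall (G : Group) (a b : G), is_dihedral_artin n G a b -> cayley_systolic G.
Proof.
  intros n Hn G a b HG.
  destruct (artin_degree n G a b HG) as [deg [hdeg [da db]]].
  exists (dual_set n G a b).
  apply (graded_systolic G (dual_set n G a b) deg (gmul a b) hdeg).
  - rewrite hdeg, da, db. reflexivity.
  - apply dual_set_graded; assumption.
  - apply dual_presentation; assumption.
Qed.
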